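(* Let $A$ be a finite set, let $X \subset A^{\mathbb Z}$ be a subshift, and let $n_0 \geq 0$ be an integer. The following are equivalent: (a) for all $u,v \in L(X)$ there exists a word $c \in L(X)$ with $|c| \leq n_0$ such that $ucv \in L(X)$; (b) $X$ is irreducible and for every $u \in L(X)$ there exists a word $c \in L(X)$ with $|c| \leq n_0$ such that $ucu \in L(X)$.
   Context: A subshift of $A^{\mathbb Z}$ is a closed shift-invariant subset (product topology of discrete topologies). $A^*$ is the free monoid of finite words over $A$ (including the empty word), $|w|$ the length, and juxtaposition denotes concatenation. A word $w$ appears in $x\in A^{\mathbb Z}$ if $w$ is empty or $w=x(i)x(i+1)\cdots x(j)$ for some $i\le j$. The language $L(X)$ is the set of words appearing in some configuration of $X$. $X$ is irreducible if for all $u,v\in L(X)$ there is $w\in L(X)$ with $uwv\in L(X)$. *)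

From mathcomp Require Import all_boot all_order all_algebra.
Set Implicit Arguments. Unset Strict Implicit. Unset Printing Implicit Defensive.
Import GRing.Theory Num.Theory.
Local Open Scope ring_scope.

Definition config (A : Type) := int -> A.

Definition shift (A : Type) (x : config A) : config A := fun i => x (i + 1).

(* Closedness in the product topology of discrete topologies: basic open
   neighbourhoods of x are cylinders fixing x on a window [-n, n]; so X is
   closed iff every x all of whose cylinder neighbourhoods meet X lies in X. *)
Definition closed_config (A : Type) (X : config A -> Prop) : Prop :=
  forall x : config A,
    (forall n : nat, exists y, X y /\
       forall i : int, `|i| <= n%:Z -> y i = x i) -> X x.

Definition shift_invariant (A : Type) (X : config A -> Prop) : Prop :=
  forall x : config A, X (shift x) <-> X x.

Definition subshift (A : Type) (X : config A -> Prop) : Prop :=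
  closed_config X /\ shift_invariant X.

Definition appears (A : Type) (w : seq A) (x : config A) : Prop :=
  w = [::] \/ exists i : int, w = mkseq (fun k => x (i + k%:Z)) (size w).

Definition lang (A : Type) (X : config A -> Prop) (w : seq A) : Prop :=
  exists x, X x /\ appears w x.

Definition irreducible (A : Type) (X : config A -> Prop) : Prop :=
  forall u v, lang X u -> lang X v -> exists w, lang X w /\ lang X (u ++ w ++ v).

From mathcomp Require Import all_boot all_order all_algebra.

(* (a) gives irreducibility with u v := u u at once.  Conversely, given u and v,
   irreducibility yields v w u in L(X); a short c with (v w u) c (v w u) in L(X)
   then contains u c v as a factor, and L(X) is closed under factors. *)

Section Language.

Variables (A : Type) (X : config A -> Prop).

Lemma appears_infix (s1 s2 s3 : seq A) (x : config A) :
  appears (s1 ++ s2 ++ s3) x -> appears s2 x.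
Proof.
case=> [E | [i E]].
  left; apply/size0nil; move: (congr1 size E); rewrite !size_cat /=.
  by move/eqP; rewrite !addn_eq0 => /and3P[_ /eqP].
right; exists (i + (size s1)%:Z)%R.
set x0 := x 0%R.
apply: (@eq_from_nth _ x0); first by rewrite size_mkseq.
move=> k Hk; rewrite nth_mkseq //.
have := congr1 (fun s => nth x0 s (size s1 + k)) E.
rewrite /= nth_cat ltnNge leq_addr /= addKn nth_cat Hk => ->.
rewrite nth_mkseq; last by rewrite !size_cat ltn_add2l ltn_addr.
by rewrite PoszD GRing.addrA.
Qed.

Lemma lang_infix (s1 s2 s3 : seq A) : lang X (s1 ++ s2 ++ s3) -> lang X s2.
Proof. by case=> x [Xx app]; exists x; split; last exact: appears_infix app. Qed.

End Language.

Theorem proposition4p1 (A : finType) (X : config A -> Prop) (n0 : nat) :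
  subshift X ->
  ((forall u v : seq A, lang X u -> lang X v ->
      exists c : seq A, lang X c /\ (size c <= n0)%N /\ lang X (u ++ c ++ v))
   <->
   (irreducible X /\
    forall u : seq A, lang X u ->
      exists c : seq A, lang X c /\ (size c <= n0)%N /\ lang X (u ++ c ++ u))).
Proof.
move=> _; split.
  move=> bounded_gap; split; last by move=> u Lu; apply: bounded_gap.
  move=> u v Lu Lv; have [c [Lc [_ Lucv]]] := bounded_gap u v Lu Lv.
  by exists c.
move=> [irrX bounded_return] u v Lu Lv.
have [w [_ Lvwu]] := irrX v u Lv Lu.
have [c [Lc [c_small Lret]]] := bounded_return _ Lvwu.
exists c; split=> //; split=> //.
apply: (@lang_infix _ _ (v ++ w) _ (w ++ u)).
by rewrite -!catA in Lret *.
Qed.
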